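(* In the discrete setting described in the context, suppose $x\in M$ satisfies $w^t(x)=w^{t-1}(x)+c^t(x)$. If $c^t(z)\ge c^t(x)$ for all $z\in M$ with $z\ge x$, then $w^t(z)\ge w^{t-1}(z)+c^t(x)$ for all $z\in M$ with $z\ge x$. Similarly, if $c^t(z)\ge c^t(x)$ for all $z\in M$ with $z\le x$, then $w^t(z)\ge w^{t-1}(z)+c^t(x)$ for all $z\in M$ with $z\le x$.
   Context: Discrete setting: a finite set of states $M=\{x_1,\dots,x_m\}\subset\mathbb{R}^+$ with $x_1=0$ and equal spacing $x_{k+1}-x_k=\delta$; a norm $\|\cdot\|$ on $\mathbb{R}$; $\theta\ge1$ and $N(\cdot)=\theta\|\cdot\|$; cost functions $c^t:M\to\mathbb{R}^+$. Work function: $w^0(x)=N(x)$ and $w^t(x)=\min_{y\in M}\{w^{t-1}(y)+c^t(y)+\theta\|x-y\|\}$ for $x\in M$. *)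

From Stdlib Require Import Reals List Lra.
Open Scope R_scope.

(* The state set M = {x_1,...,x_m} with x_1 = 0 and x_{k+1} - x_k = d,
   i.e. x_{k+1} = k * d for k = 0..m-1. *)
Definition states (m : nat) (d : R) : list R :=
  map (fun k => INR k * d) (seq 0 m).

Definition min_over (f : R -> R) (l : list R) : R :=
  match l with
  | nil => 0
  | h :: tl => fold_right (fun y acc => Rmin (f y) acc) (f h) tl
  end.

Record is_norm (nrm : R -> R) : Prop := {
  norm_nonneg : forall x, 0 <= nrm x;
  norm_definite : forall x, nrm x = 0 -> x = 0;
  norm_homog : forall a x, nrm (a * x) = Rabs a * nrm x;
  norm_triangle : forall x y, nrm (x + y) <= nrm x + nrm y
}.

Fixpoint work (theta : R) (nrm : R -> R) (M : list R) (c : nat -> R -> R)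
    (t : nat) (x : R) : R :=
  match t with
  | O => theta * nrm x
  | S t' => min_over (fun y => work theta nrm M c t' y + c (S t') y
                               + theta * nrm (x - y)) M
  end.

(* Put C = c^t and W = w^{t-1}, and let z lie on a side of x where C >= C(x).
   For every candidate y in the minimum defining w^t(z): if y is on the same
   side, then W(y) + theta||z - y|| >= W(z) by the Lipschitz property of W and
   C(y) >= C(x).  Otherwise x lies between y and z, so
   ||z - y|| = ||z - x|| + ||x - y||, and the optimality of y = x in the minimum
   defining w^t(x) together with W(x) + theta||z - x|| >= W(z) gives
   W(y) + C(y) + theta||z - y|| >= W(z) + C(x). *)
From Stdlib Require Import Reals List Lra Lia.
Open Scope R_scope.

Lemma fold_Rmin_le (f : R -> R) (a : R) (l : list R) :
  fold_right (fun y acc => Rmin (f y) acc) a l <= a /\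
  forall y, In y l -> fold_right (fun y acc => Rmin (f y) acc) a l <= f y.
Proof.
  induction l as [|h l [IHa IHl]]; simpl; [split; [lra | tauto] |].
  split.
  - eapply Rle_trans; [apply Rmin_r | exact IHa].
  - intros y [<- | Hy]; [apply Rmin_l |].
    eapply Rle_trans; [apply Rmin_r | exact (IHl y Hy)].
Qed.

Lemma min_over_le (f : R -> R) (l : list R) (y : R) :
  In y l -> min_over f l <= f y.
Proof.
  destruct l as [|h l]; simpl; [tauto |].
  destruct (fold_Rmin_le f (f h) l) as [Hh Hl].
  intros [<- | Hy]; auto.
Qed.

Lemma fold_Rmin_attained (f : R -> R) (a : R) (l : list R) :
  fold_right (fun y acc => Rmin (f y) acc) a l = a \/
  exists u, In u l /\ fold_right (fun y acc => Rmin (f y) acc) a l = f u.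
Proof.
  induction l as [|h l IH]; simpl; [auto |].
  destruct (Rle_dec (f h) (fold_right (fun y acc => Rmin (f y) acc) a l)).
  - right; exists h; split; [left; reflexivity | apply Rmin_left; assumption].
  - rewrite Rmin_right by lra.
    destruct IH as [E | [u [Hu E]]]; [left | right; exists u]; auto.
Qed.

Lemma min_over_attained (f : R -> R) (l : list R) :
  l <> nil -> exists u, In u l /\ min_over f l = f u.
Proof.
  destruct l as [|h l]; [congruence | intros _; simpl].
  destruct (fold_Rmin_attained f (f h) l) as [E | [u [Hu E]]];
    [exists h | exists u]; auto.
Qed.

Lemma le_min_over (f : R -> R) (l : list R) (b : R) :
  l <> nil -> (forall y, In y l -> b <= f y) -> b <= min_over f l.
Proof.
  intros Hl Hb; destruct (min_over_attained f l Hl) as [u [Hu ->]]; auto.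
Qed.

Definition between (y x z : R) : Prop := (y <= x <= z) \/ (z <= x <= y).

Section NormOnR.

Variable nrm : R -> R.
Hypothesis Hnrm : is_norm nrm.

Lemma norm_R_abs (a : R) : nrm a = Rabs a * nrm 1.
Proof. rewrite <- (norm_homog _ Hnrm a 1); f_equal; ring. Qed.

Lemma norm_sub_between (y x z : R) :
  between y x z -> nrm (z - y) = nrm (z - x) + nrm (x - y).
Proof.
  rewrite (norm_R_abs (z - y)), (norm_R_abs (z - x)), (norm_R_abs (x - y)).
  intros [Hb | Hb]; [rewrite !Rabs_right by lra | rewrite !Rabs_left1 by lra];
    ring.
Qed.

Lemma norm_sub_triangle (x y z : R) : nrm (x - z) <= nrm (x - y) + nrm (y - z).
Proof.
  replace (x - z) with ((x - y) + (y - z)) by ring; apply (norm_triangle _ Hnrm).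
Qed.

End NormOnR.

Section WorkFunction.

Variables (theta : R) (nrm : R -> R) (M : list R) (c : nat -> R -> R).
Hypotheses (Hnrm : is_norm nrm) (Htheta : 0 <= theta) (HM : M <> nil).

Let w := work theta nrm M c.

Lemma work_lipschitz (t : nat) (x y : R) :
  w t x <= w t y + theta * nrm (x - y).
Proof.
  destruct t as [|t]; unfold w; simpl.
  - assert (nrm x <= nrm y + nrm (x - y)).
    { replace x with ((x - y) + y) at 1 by ring.
      pose proof (norm_triangle _ Hnrm (x - y) y); lra. }
    rewrite <- Rmult_plus_distr_l; apply Rmult_le_compat_l; assumption.
  - set (g z u := work theta nrm M c t u + c (S t) u + theta * nrm (z - u)).
    change (min_over (g x) M <= min_over (g y) M + theta * nrm (x - y)).
    destruct (min_over_attained (g y) M HM) as [u [Hu ->]].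
    apply (Rle_trans _ (g x u)); [exact (min_over_le (g x) M u Hu) |].
    unfold g; pose proof (norm_sub_triangle nrm Hnrm x y u) as Htri.
    apply (Rmult_le_compat_l theta) in Htri; [lra | assumption].
Qed.

Lemma work_succ_ge_on_side (t : nat) (x : R) (side : R -> Prop) :
  w (S t) x = w t x + c (S t) x ->
  (forall y, In y M -> side y -> c (S t) x <= c (S t) y) ->
  (forall y z, side z -> side y \/ between y x z) ->
  forall z, side z -> w (S t) z >= w t z + c (S t) x.
Proof.
  intros Hwx Hcost Hsides z Hz; apply Rle_ge.
  unfold w; simpl; fold w.
  apply le_min_over; [exact HM | intros y Hy].
  pose proof (work_lipschitz t z y) as Hzy.
  destruct (Hsides y z Hz) as [Hsy | Hbetween].
  - pose proof (Hcost y Hy Hsy); lra.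
  - assert (Hopt : w t x + c (S t) x <= w t y + c (S t) y + theta * nrm (x - y))
      by (rewrite <- Hwx; unfold w; simpl; fold w;
          exact (min_over_le (fun u => w t u + c (S t) u + theta * nrm (x - u))
                   M y Hy)).
    pose proof (work_lipschitz t z x) as Hzx.
    rewrite (norm_sub_between nrm Hnrm y x z Hbetween); lra.
Qed.

End WorkFunction.

Theorem lemma8 (m : nat) (d theta : R) (nrm : R -> R) (c : nat -> R -> R)
    (t : nat) (x : R) :
  (1 <= m)%nat -> 0 < d -> is_norm nrm -> 1 <= theta ->
  (forall s y, In y (states m d) -> 0 <= c s y) ->
  (1 <= t)%nat ->
  In x (states m d) ->
  work theta nrm (states m d) c t x
    = work theta nrm (states m d) c (t - 1) x + c t x ->
  ((forall z, In z (states m d) -> x <= z -> c t x <= c t z) ->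
   forall z, In z (states m d) -> x <= z ->
     work theta nrm (states m d) c t z
       >= work theta nrm (states m d) c (t - 1) z + c t x) /\
  ((forall z, In z (states m d) -> z <= x -> c t x <= c t z) ->
   forall z, In z (states m d) -> z <= x ->
     work theta nrm (states m d) c t z
       >= work theta nrm (states m d) c (t - 1) z + c t x).
Proof.
  intros Hm _ Hnrm Htheta _ Ht _ Hwx.
  assert (HM : states m d <> nil).
  { unfold states; destruct m as [|m]; [lia | simpl; congruence]. }
  destruct t as [|t]; [lia |].
  replace (S t - 1)%nat with t in * by lia.
  split; intros Hcost z _ Hz.
  - apply (work_succ_ge_on_side theta nrm _ c Hnrm ltac:(lra) HM t x
             (fun z => x <= z)); auto.
    intros y z' Hz'; destruct (Rle_dec x y); [left | right; left]; lra.
  - apply (work_succ_ge_on_side theta nrm _ c Hnrm ltac:(lra) HM t x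
             (fun z => z <= x)); auto.
    intros y z' Hz'; destruct (Rle_dec y x); [left | right; right]; lra.
Qed.
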